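(* Let $p,q\geq1$ be integers and let $(\vartheta(s),\alpha(s))$ be a trajectory of the differential system $$\dot\vartheta=3\sin\vartheta\cos\vartheta\sin(\alpha-\vartheta),\qquad \dot\alpha=q\cos\alpha\cos\vartheta-p\sin\alpha\sin\vartheta.$$ Suppose that for some $s_0$ one has $0<\vartheta(s_0)<\pi/2$ and $\vartheta(s_0)-\pi/2\leq\alpha(s_0)\leq\vartheta(s_0)+\pi/2$, i.e. the trajectory is in $R_1=\{(\vartheta,\alpha):0\leq\vartheta\leq\pi/2,\ \vartheta-\pi/2\leq\alpha\leq\vartheta+\pi/2\}$. Then the trajectory remains in $R_1$ for all $s\geq s_0$. *)

From Stdlib Require Import Reals Lra.
Open Scope R_scope.

Definition trajectory (p q : nat) (theta alpha : R -> R) : Prop :=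
  forall s : R,
    derivable_pt_lim theta s
      (3 * sin (theta s) * cos (theta s) * sin (alpha s - theta s)) /\
    derivable_pt_lim alpha s
      (INR q * cos (alpha s) * cos (theta s) - INR p * sin (alpha s) * sin (theta s)).

Definition inR1 (th al : R) : Prop :=
  0 <= th <= PI / 2 /\ th - PI / 2 <= al <= th + PI / 2.

(* Along the flow, [(sin θ)^2] and [(cos θ)^2] decay at most like [exp (-6 s)],
   so neither vanishes and [θ] stays in [(0, π/2)].  The gap [α - θ] then cannot
   leave [[-π/2, π/2]]: on the boundary [α - θ = ±π/2] its rate of change is
   [∓(p + q + 3) sin θ cos θ], which points strictly back into the strip. *)

From Stdlib Require Import Reals.
From Stdlib Require Import Lra.
Open Scope R_scope.

Lemma continuity_pt_pos_nbhd (f : R -> R) (x : R) :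
  continuity_pt f x -> 0 < f x ->
  exists del, 0 < del /\ forall y, Rabs (y - x) < del -> 0 < f y.
Proof.
  intros Hc Hx.
  destruct (Hc (f x) Hx) as [del [Hdel Hball]].
  exists del; split; [exact Hdel|]; intros y Hy.
  destruct (Req_dec y x) as [->|Hne]; [exact Hx|].
  assert (Hdist : Rabs (f y - f x) < f x).
  { apply Hball; split; [split; [exact I|congruence]|exact Hy]. }
  apply Rabs_def2 in Hdist; lra.
Qed.

Lemma derivable_pt_lim_neg_right (f : R -> R) (x l : R) :
  derivable_pt_lim f x l -> l < 0 ->
  exists del, 0 < del /\ forall h, 0 < h < del -> f (x + h) < f x.
Proof.
  intros Hd Hl.
  destruct (Hd (- l / 2)) as [del Hdel]; [lra|].
  exists del; split; [apply cond_pos|]; intros h Hh.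
  assert (Hq : Rabs ((f (x + h) - f x) / h - l) < - l / 2).
  { apply Hdel; [lra|rewrite Rabs_right; lra]. }
  apply Rabs_def2 in Hq.
  assert (Hslope : (f (x + h) - f x) / h < 0) by lra.
  assert (Hdiff : f (x + h) - f x = (f (x + h) - f x) / h * h) by (field; lra).
  nra.
Qed.

Lemma nonpos_barrier (e e' : R -> R) (a b : R) :
  a <= b ->
  (forall t, derivable_pt_lim e t (e' t)) ->
  e a <= 0 ->
  (forall t, a <= t <= b -> e t = 0 -> e' t < 0) ->
  e b <= 0.
Proof.
  intros Hab Hd Ha Hzero.
  destruct (Rle_dec (e b) 0) as [Hb|Hb]; [exact Hb|exfalso]; apply Rnot_le_lt in Hb.
  set (S := fun t => a <= t <= b /\ e t <= 0).
  destruct (completeness S) as [m [Hub Hlub]].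
  { exists b; intros t [[_ Ht] _]; exact Ht. }
  { exists a; split; [lra|exact Ha]. }
  assert (Hcont : forall t, continuity_pt e t).
  { intro t; exact (derivable_continuous_pt e t (exist _ (e' t) (Hd t))). }
  assert (Ham : a <= m) by (apply Hub; split; [lra|exact Ha]).
  assert (Hmb : m <= b) by (apply Hlub; intros t [[_ Ht] _]; exact Ht).
  assert (Hem : e m <= 0).
  { destruct (Rle_dec (e m) 0) as [Hle|Hgt]; [exact Hle|exfalso]; apply Rnot_le_lt in Hgt.
    destruct (continuity_pt_pos_nbhd e m (Hcont m) Hgt) as [del [Hdel Hpos]].
    assert (m <= m - del / 2); [|lra].
    apply Hlub; intros t [Ht Het].
    destruct (Rle_dec t (m - del / 2)) as [Hle|Hgt']; [exact Hle|exfalso].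
    assert (t <= m) by (apply Hub; split; assumption).
    assert (0 < e t); [apply Hpos, Rabs_def1; lra|lra]. }
  assert (Hmb' : m < b).
  { destruct Hmb as [Hlt|Heq]; [exact Hlt|subst m; lra]. }
  assert (Hright : exists t, m < t <= b /\ e t <= 0).
  { destruct Hem as [Hneg|Hzero_m].
    - destruct (continuity_pt_pos_nbhd (fun u => - e u) m
                  (continuity_pt_opp e m (Hcont m)) ltac:(lra)) as [del [Hdel Hpos]].
      exists (Rmin b (m + del / 2)).
      assert (m < Rmin b (m + del / 2)) by (apply Rmin_glb_lt; lra).
      pose proof (Rmin_l b (m + del / 2)); pose proof (Rmin_r b (m + del / 2)).
      assert (0 < - e (Rmin b (m + del / 2))); [apply Hpos, Rabs_def1; lra|lra].
    - destruct (derivable_pt_lim_neg_right e m (e' m) (Hd m) (Hzero m ltac:(lra) Hzero_m))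
        as [del [Hdel Hdec]].
      set (h := Rmin (b - m) (del / 2)).
      assert (0 < h) by (apply Rmin_glb_lt; lra).
      pose proof (Rmin_l (b - m) (del / 2)); pose proof (Rmin_r (b - m) (del / 2)).
      exists (m + h); split; [unfold h in *; lra|].
      pose proof (Hdec h ltac:(unfold h in *; lra)); lra. }
  destruct Hright as [t [[Hmt Htb] Het]].
  assert (t <= m) by (apply Hub; split; [lra|exact Het]).
  lra.
Qed.

Lemma derivable_pt_lim_exp_scal (k s : R) :
  derivable_pt_lim (fun u => exp (k * u)) s (k * exp (k * s)).
Proof.
  replace (k * exp (k * s)) with (exp (k * s) * (k * 1)) by ring.
  exact (derivable_pt_lim_comp (mult_real_fct k id) exp s _ _
           (derivable_pt_lim_scal id k s 1 (derivable_pt_lim_id s))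
           (derivable_pt_lim_exp _)).
Qed.

Lemma derivable_nonneg_nondecreasing (F F' : R -> R) (a b : R) :
  (forall s, derivable_pt_lim F s (F' s)) -> (forall s, 0 <= F' s) ->
  a <= b -> F a <= F b.
Proof.
  intros HF HF' [Hab|<-]; [|lra].
  destruct (MVT_cor2 F F' a b Hab (fun c _ => HF c)) as [c [Hmvt _]].
  specialize (HF' c); nra.
Qed.

(* Gronwall: [F exp (k s)] is nondecreasing. *)
Lemma pos_of_derivative_ge_linear (F F' : R -> R) (k s0 : R) :
  (forall s, derivable_pt_lim F s (F' s)) -> (forall s, - k * F s <= F' s) ->
  0 < F s0 -> forall s, s0 <= s -> 0 < F s.
Proof.
  intros HF HF' H0 s Hs.
  set (G := fun u => F u * exp (k * u)).
  assert (HG : forall u, derivable_pt_lim G u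
                 (F' u * exp (k * u) + F u * (k * exp (k * u)))).
  { intro u; exact (derivable_pt_lim_mult F _ u _ _ (HF u) (derivable_pt_lim_exp_scal k u)). }
  assert (Hmono : G s0 <= G s).
  { apply (derivable_nonneg_nondecreasing G _ s0 s HG); [|exact Hs].
    intro u; pose proof (exp_pos (k * u)); specialize (HF' u).
    replace (F' u * exp (k * u) + F u * (k * exp (k * u)))
      with ((F' u + k * F u) * exp (k * u)) by ring.
    apply Rmult_le_pos; lra. }
  unfold G in Hmono; pose proof (exp_pos (k * s0)); pose proof (exp_pos (k * s)).
  destruct (Rlt_le_dec 0 (F s)) as [Hpos|Hle]; [exact Hpos|nra].
Qed.

Lemma continuity_stays_above (f : R -> R) (a s0 : R) :
  continuity f -> a < f s0 -> (forall s, s0 <= s -> f s <> a) ->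
  forall s, s0 <= s -> a < f s.
Proof.
  intros Hc H0 Hne s Hs.
  destruct (Rlt_le_dec a (f s)) as [Hlt|Hle]; [exact Hlt|exfalso].
  destruct (IVT_cor (fun u => f u - a) s0 s) as [z [Hz Hfz]].
  - apply continuity_minus; [exact Hc|apply continuity_const; intros ? ?; reflexivity].
  - exact Hs.
  - nra.
  - apply (Hne z); [lra|lra].
Qed.

Definition theta_rate (th al : R) : R := 3 * sin th * cos th * sin (al - th).

Definition alpha_rate (p q : nat) (th al : R) : R :=
  INR q * cos al * cos th - INR p * sin al * sin th.

Lemma gap_rate_at_boundary (p q : nat) (th al : R) :
  0 < th < PI / 2 -> (al - th)² = (PI / 2)² ->
  (al - th) * (alpha_rate p q th al - theta_rate th al) < 0.
Proof.
  intros Hth Hgap.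
  pose proof PI_RGT_0; pose proof (pos_INR p); pose proof (pos_INR q).
  pose proof (sin_gt_0 th ltac:(lra) ltac:(lra)).
  pose proof (cos_gt_0 th ltac:(lra) ltac:(lra)).
  assert (Hscale : 0 < PI * ((INR p + INR q + 3) * (sin th * cos th))).
  { apply Rmult_lt_0_compat; [lra|apply Rmult_lt_0_compat; nra]. }
  unfold Rsqr, alpha_rate, theta_rate in *.
  assert (Hside : al = th + PI / 2 \/ al = th + - (PI / 2)) by nra.
  destruct Hside as [-> | ->].
  - replace (th + PI / 2 - th) with (PI / 2) by ring.
    rewrite cos_plus, sin_plus, cos_PI2, sin_PI2; nra.
  - replace (th + - (PI / 2) - th) with (- (PI / 2)) by ring.
    rewrite cos_plus, sin_plus, cos_neg, sin_neg, cos_PI2, sin_PI2; nra.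
Qed.

Section Trajectory.

Variables (p q : nat) (theta alpha : R -> R).
Hypothesis htraj : trajectory p q theta alpha.

Let theta_deriv s : derivable_pt_lim theta s (theta_rate (theta s) (alpha s)).
Proof. exact (proj1 (htraj s)). Qed.

Let alpha_deriv s : derivable_pt_lim alpha s (alpha_rate p q (theta s) (alpha s)).
Proof. exact (proj2 (htraj s)). Qed.

Let theta_continuous : continuity theta.
Proof. intro s; exact (derivable_continuous_pt theta s (exist _ _ (theta_deriv s))). Qed.

Lemma sin_theta_sqr_pos (s0 : R) :
  0 < (sin (theta s0))² -> forall s, s0 <= s -> 0 < (sin (theta s))².
Proof.
  eapply (pos_of_derivative_ge_linear (fun u => (sin (theta u))²) _ 6 s0); intro s.
  - exact (derivable_pt_lim_comp (fun u => sin (theta u)) Rsqr s _ _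
             (derivable_pt_lim_comp theta sin s _ _ (theta_deriv s) (derivable_pt_lim_sin _))
             (derivable_pt_lim_Rsqr _)).
  - pose proof (SIN_bound (alpha s - theta s)); pose proof (sin2_cos2 (theta s)).
    unfold theta_rate, Rsqr in *.
    set (sn := sin (theta s)) in *; set (c := cos (theta s)) in *.
    set (sd := sin (alpha s - theta s)) in *.
    assert (0 <= sn * sn * (c * c) * (sd + 1)) by
      (apply Rmult_le_pos; [apply Rmult_le_pos|]; nra).
    nra.
Qed.

Lemma cos_theta_sqr_pos (s0 : R) :
  0 < (cos (theta s0))² -> forall s, s0 <= s -> 0 < (cos (theta s))².
Proof.
  eapply (pos_of_derivative_ge_linear (fun u => (cos (theta u))²) _ 6 s0); intro s.
  - exact (derivable_pt_lim_comp (fun u => cos (theta u)) Rsqr s _ _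
             (derivable_pt_lim_comp theta cos s _ _ (theta_deriv s) (derivable_pt_lim_cos _))
             (derivable_pt_lim_Rsqr _)).
  - pose proof (SIN_bound (alpha s - theta s)); pose proof (sin2_cos2 (theta s)).
    unfold theta_rate, Rsqr in *.
    set (sn := sin (theta s)) in *; set (c := cos (theta s)) in *.
    set (sd := sin (alpha s - theta s)) in *.
    assert (0 <= sn * sn * (c * c) * (1 - sd)) by
      (apply Rmult_le_pos; [apply Rmult_le_pos|]; nra).
    nra.
Qed.

Lemma theta_stays_in_open_quadrant (s0 : R) :
  0 < theta s0 < PI / 2 -> forall s, s0 <= s -> 0 < theta s < PI / 2.
Proof.
  intros H0 s Hs; pose proof PI_RGT_0.
  assert (Hsin := sin_theta_sqr_pos s0 ltac:(apply Rsqr_pos_lt, Rgt_not_eq, sin_gt_0; lra)).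
  assert (Hcos := cos_theta_sqr_pos s0 ltac:(apply Rsqr_pos_lt, Rgt_not_eq, cos_gt_0; lra)).
  split.
  - apply (continuity_stays_above theta 0 s0 theta_continuous); [lra| |exact Hs].
    intros t Ht Hzero; specialize (Hsin t Ht).
    rewrite Hzero, sin_0, Rsqr_0 in Hsin; lra.
  - enough (- (PI / 2) < - theta s) by lra.
    apply (continuity_stays_above (fun u => - theta u) _ s0
             (continuity_opp _ theta_continuous)); [lra| |exact Hs].
    intros t Ht Hbdry; specialize (Hcos t Ht).
    replace (theta t) with (PI / 2) in Hcos by lra.
    rewrite cos_PI2, Rsqr_0 in Hcos; lra.
Qed.

Lemma gap_stays_in_strip (s0 : R) :
  0 < theta s0 < PI / 2 -> theta s0 - PI / 2 <= alpha s0 <= theta s0 + PI / 2 ->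
  forall s, s0 <= s -> theta s - PI / 2 <= alpha s <= theta s + PI / 2.
Proof.
  intros H0 H1 s Hs; pose proof PI_RGT_0.
  set (e := fun u => (alpha u - theta u)² - (PI / 2)²).
  assert (He : forall u, derivable_pt_lim e u
      (2 * (alpha u - theta u)
         * (alpha_rate p q (theta u) (alpha u) - theta_rate (theta u) (alpha u)) - 0)).
  { intro u.
    pose proof (derivable_pt_lim_minus _ _ u _ _ (alpha_deriv u) (theta_deriv u)) as Hgap.
    exact (derivable_pt_lim_minus _ (fct_cte ((PI / 2)²)) u _ _
             (derivable_pt_lim_comp _ Rsqr u _ _ Hgap (derivable_pt_lim_Rsqr _))
             (derivable_pt_lim_const _ u)). }
  assert (Hes : e s <= 0).
  { apply (nonpos_barrier e _ s0 s Hs He).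
    - unfold e, Rsqr; nra.
    - intros t Ht Het.
      pose proof (gap_rate_at_boundary p q (theta t) (alpha t)
                    (theta_stays_in_open_quadrant s0 H0 t ltac:(lra)) ltac:(unfold e in Het; lra)).
      lra. }
  unfold e, Rsqr in Hes; split; nra.
Qed.

End Trajectory.

Theorem lemma4p7 (p q : nat) (hp : (1 <= p)%nat) (hq : (1 <= q)%nat)
  (theta alpha : R -> R) (htraj : trajectory p q theta alpha) (s0 : R)
  (h0 : 0 < theta s0 < PI / 2)
  (h1 : theta s0 - PI / 2 <= alpha s0 <= theta s0 + PI / 2) :
  forall s : R, s0 <= s -> inR1 (theta s) (alpha s).
Proof.
  intros s Hs.
  pose proof (theta_stays_in_open_quadrant p q theta alpha htraj s0 h0 s Hs).
  split; [lra|exact (gap_stays_in_strip p q theta alpha htraj s0 h0 h1 s Hs)].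
Qed.
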